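(* Let $(f,g),(f',g')\in\Theta$ both satisfy the diversity condition and satisfy $p_{f,g}(y\mid x)=p_{f',g'}(y\mid x)$ for all $(x,y)\in\mathcal X\times\mathcal Y$. Then for any two choices of pivot and subset, $(\tilde y,\mathcal J)$ and $(\hat y,\mathcal K)$ with $\mathcal J\subseteq\mathcal Y\setminus\{\tilde y\}$, $\mathcal K\subseteq\mathcal Y\setminus\{\hat y\}$, $|\mathcal J|=|\mathcal K|=m$, such that the corresponding shifted unembedding matrices $\tilde L_{\mathcal J}$ and $\hat L_{\mathcal K}$ of $(f,g)$ are invertible, one has $$\tilde L_{\mathcal J}^{-\top}\tilde L_{\mathcal J}'^{\top}=\hat L_{\mathcal K}^{-\top}\hat L_{\mathcal K}'^{\top}.$$
   Context: Model class $\Theta$: pairs $(f,g)$, $f:\mathcal X\to\mathbb R^m$, $g:\mathcal Y\to\mathbb R^m$, $\mathcal Y$ finite with $k>m$ labels, $\sum_y g(y)=0$, inducing $p_{f,g}(y\mid x)\propto\exp(f(x)^\top g(y))$; $p_x$ is the data distribution. Logits $u(x)=(f(x)^\top g(y))_{y\in\mathcal Y}$. Diversity condition: $\dim\mathrm{span}\{u(x):x\in\mathrm{supp}(p_x)\}=m$. For a pivot $\tilde y$ and $\mathcal J=\{y_1,\dots,y_m\}\subseteq\mathcal Y\setminus\{\tilde y\}$, $\tilde L_{\mathcal J}=(g(y_1)-g(\tilde y)\ \cdots\ g(y_m)-g(\tilde y))\in\mathbb R^{m\times m}$; $\tilde L'_{\mathcal J}$ is defined in the same way from $g'$; $\hat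 L_{\mathcal K},\hat L'_{\mathcal K}$ likewise for pivot $\hat y$ and subset $\mathcal K$. *)

From HB Require Import structures.
From mathcomp Require Import all_boot all_order all_algebra.
From mathcomp Require Import all_classical all_reals.
From mathcomp Require Import sequences exp.
Set Implicit Arguments. Unset Strict Implicit. Unset Printing Implicit Defensive.
Import Order.TTheory GRing.Theory Num.Theory.
Local Open Scope ring_scope.

Section Defs.
Variables (R : realType) (X : Type) (Y : finType) (m : nat).

Definition inner (a b : 'rV[R]_m) : R := (a *m b^T) ord0 ord0.

Definition cond_prob (f : X -> 'rV[R]_m) (g : Y -> 'rV[R]_m) (x : X) (y : Y) : R :=
  expR (inner (f x) (g y)) / \sum_(y' : Y) expR (inner (f x) (g y')).

Definition logits (f : X -> 'rV[R]_m) (g : Y -> 'rV[R]_m) (x : X) : 'rV[R]_#|Y| :=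
  \row_(j < #|Y|) inner (f x) (g (enum_val j)).

(* dim span { u(x) : x in supp } = m, where the dimension of the span of a
   (possibly infinite) family is the maximal rank of a finite subfamily. *)
Definition diversity (supp : X -> Prop) (f : X -> 'rV[R]_m) (g : Y -> 'rV[R]_m) : Prop :=
  (exists (n : nat) (xs : 'I_n -> X), (forall i, supp (xs i)) /\
      \rank (\matrix_(i < n, j < #|Y|) logits f g (xs i) ord0 j) = m)
  /\ (forall (n : nat) (xs : 'I_n -> X), (forall i, supp (xs i)) ->
      (\rank (\matrix_(i < n, j < #|Y|) logits f g (xs i) ord0 j) <= m)%N).

Definition in_Theta (g : Y -> 'rV[R]_m) : Prop := \sum_(y : Y) g y = 0.

Definition shiftedL (g : Y -> 'rV[R]_m) (pivot : Y) (J : 'I_m -> Y) : 'M[R]_m :=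
  \matrix_(i < m, j < m) (g (J j) ord0 i - g pivot ord0 i).

(* J is an m-element subset of Y \ {pivot}, given as an injective enumeration *)
Definition valid_subset (pivot : Y) (J : 'I_m -> Y) : Prop :=
  injective J /\ (forall j, J j != pivot).

End Defs.

From HB Require Import structures.
From mathcomp Require Import all_boot all_order all_algebra.
From mathcomp Require Import all_classical all_reals.
From mathcomp Require Import sequences exp.
From mathcomp Require Import ring.
Set Implicit Arguments. Unset Strict Implicit. Unset Printing Implicit Defensive.
Import Order.TTheory GRing.Theory Num.Theory.
Local Open Scope ring_scope.

(* Equal conditionals force equal logit differences, so
   [f x *m L = f' x *m L'] for every shifted unembedding matrix; when [L] is
   invertible this reads [f x = f' x *m (L' *m L^-1)].  Hence
   [f' x *m (L'_J L_J^-1 - L'_K L_K^-1) = 0] for all [x]; diversity makes the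
   embeddings [f' x] span R^m, so the bracket vanishes, and transposing gives
   the claim. *)

Section Identifiability.
Variables (R : realType) (X : Type) (Y : finType) (m : nat).
Implicit Types (f : X -> 'rV[R]_m) (g : Y -> 'rV[R]_m).

Lemma partition_fun_gt0 f g x (y0 : Y) :
  0 < \sum_(y : Y) expR (inner (f x) (g y)) :> R.
Proof.
rewrite (bigD1 y0) //= ltr_pwDl ?expR_gt0 //.
by apply: sumr_ge0 => z _; rewrite expR_ge0.
Qed.

Lemma cond_prob_ratio f g x y z :
  cond_prob f g x y / cond_prob f g x z
  = expR (inner (f x) (g y) - inner (f x) (g z)).
Proof.
rewrite /cond_prob expRB; have := partition_fun_gt0 f g x y.
set S := \sum_(_ : Y) _ => S_gt0.
have Sn0 : S != 0 by rewrite gt_eqF.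
have ezn0 : expR (inner (f x) (g z)) != 0 by rewrite gt_eqF ?expR_gt0.
by field; rewrite Sn0 ezn0.
Qed.

Lemma cond_prob_eq_logit_diff f f' g g' :
  (forall x y, cond_prob f g x y = cond_prob f' g' x y) ->
  forall x y z, inner (f x) (g y) - inner (f x) (g z)
              = inner (f' x) (g' y) - inner (f' x) (g' z).
Proof. by move=> eq_p x y z; apply: expR_inj; rewrite -!cond_prob_ratio !eq_p. Qed.

Lemma mul_shiftedL (a : 'rV[R]_m) g pivot (J : 'I_m -> Y) j :
  (a *m shiftedL g pivot J) ord0 j = inner a (g (J j)) - inner a (g pivot).
Proof.
rewrite /inner !mxE -sumrB; apply: eq_bigr => i _.
by rewrite !mxE mulrBr.
Qed.

Lemma cond_prob_eq_mul_shiftedL f f' g g' :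
  (forall x y, cond_prob f g x y = cond_prob f' g' x y) ->
  forall x pivot (J : 'I_m -> Y),
  f x *m shiftedL g pivot J = f' x *m shiftedL g' pivot J.
Proof.
move=> eq_p x pivot J; apply/rowP => j.
by rewrite !mul_shiftedL; apply: cond_prob_eq_logit_diff.
Qed.

Lemma cond_prob_eq_embedding f f' g g' :
  (forall x y, cond_prob f g x y = cond_prob f' g' x y) ->
  forall x pivot (J : 'I_m -> Y), shiftedL g pivot J \in unitmx ->
  f x = f' x *m (shiftedL g' pivot J *m invmx (shiftedL g pivot J)).
Proof.
move=> eq_p x pivot J unitL.
by rewrite mulmxA -(cond_prob_eq_mul_shiftedL eq_p) -mulmxA mulmxV ?mulmx1.
Qed.

Definition embedding_mx f n (xs : 'I_n -> X) : 'M[R]_(n, m) :=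
  \matrix_(i, j) f (xs i) ord0 j.

Definition unembedding_mx g : 'M[R]_(m, #|Y|) :=
  \matrix_(i, j) g (enum_val j) ord0 i.

Lemma logits_mxE f g n (xs : 'I_n -> X) :
  \matrix_(i < n, j < #|Y|) logits f g (xs i) ord0 j
  = embedding_mx f xs *m unembedding_mx g.
Proof.
apply/matrixP => i j; rewrite !mxE /inner !mxE; apply: eq_bigr => k _.
by rewrite !mxE.
Qed.

Lemma row_embedding_mx f n (xs : 'I_n -> X) i :
  row i (embedding_mx f xs) = f (xs i).
Proof. by apply/rowP => j; rewrite !mxE. Qed.

Lemma diversity_row_full supp f g : diversity supp f g ->
  exists n (xs : 'I_n -> X), row_full (embedding_mx f xs).
Proof.
move=> [[n [xs [_ rank_logits]]] _]; exists n, xs.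
rewrite /row_full eqn_leq rank_leq_col -{1}rank_logits logits_mxE.
exact: mxrankM_maxl.
Qed.

End Identifiability.

Theorem mainTheorem10 (R : realType) (X : Type) (Y : finType) (m : nat)
  (supp : X -> Prop)
  (f f' : X -> 'rV[R]_m) (g g' : Y -> 'rV[R]_m) :
  (m < #|Y|)%N ->
  in_Theta g -> in_Theta g' ->
  diversity supp f g -> diversity supp f' g' ->
  (forall x y, cond_prob f g x y = cond_prob f' g' x y) ->
  forall (yt : Y) (J : 'I_m -> Y) (yh : Y) (K : 'I_m -> Y),
  valid_subset yt J -> valid_subset yh K ->
  shiftedL g yt J \in unitmx -> shiftedL g yh K \in unitmx ->
  invmx (shiftedL g yt J)^T *m (shiftedL g' yt J)^T
  = invmx (shiftedL g yh K)^T *m (shiftedL g' yh K)^T.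
Proof.
move=> _ _ _ _ diversity' eq_p yt J yh K _ _ unitJ unitK.
rewrite -!trmx_inv -!trmx_mul; congr trmx.
have [n [xs full_f']] := diversity_row_full diversity'.
apply: (row_full_inj full_f'); apply/row_matrixP => i.
rewrite !row_mul row_embedding_mx.
by rewrite -(cond_prob_eq_embedding eq_p (xs i) unitJ) -(cond_prob_eq_embedding eq_p (xs i) unitK).
Qed.
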